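(* Let $\alpha\in(0,1)$ and for $\rho\ge0$ and real $\chi\notin\pi\mathbb{Z}$ let $$I_\alpha(\rho,\chi)=\int_{-\infty}^{+\infty}dy\,e^{i\rho\cosh y}\,\frac{e^{-y\alpha}}{1-e^{-2y-2i\chi}} .$$ Then there is a constant $C$ such that $|I_\alpha(\rho,\chi)|\le C$, and for every $0\le\epsilon<\min(\alpha,1-\alpha)$ there is a constant $C(\epsilon)$ such that $$|I_\alpha(\rho,\chi)-I_\alpha(0,\chi)|\le C(\epsilon)\,\rho^{\epsilon},$$ both estimates holding uniformly in $\rho$ and $\chi$. *)

From Stdlib Require Import Reals.
From Coquelicot Require Import Coquelicot.
Open Scope R_scope.

Definition cexp (z : C) : C :=
  (exp (Re z) * cos (Im z), exp (Re z) * sin (Im z)).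

Definition I_integrand (alpha rho chi : R) (y : R) : C :=
  Cmult (cexp (0, rho * cosh y))
        (Cdiv (RtoC (exp (- (y * alpha))))
              (Cminus (RtoC 1) (cexp (- (2 * y), - (2 * chi))))).

Definition I_alpha (alpha rho chi : R) : C :=
  @RInt_gen C_R_CompleteNormedModule (I_integrand alpha rho chi)
           (Rbar_locally m_infty) (Rbar_locally p_infty).

From Stdlib Require Import Reals Lra Psatz.
From Coquelicot Require Import Coquelicot.
Open Scope R_scope.

(* Write the integrand as e^{i rho cosh y} K(y) with K(y) = e^{-alpha y} / (1 - e^{-2y-2i chi}).
   The improper integral exists because |K(y)| <= 2 e^{-alpha |y|} for |y| >= 1, and since cosh
   is even it is the limit of the integrals over [0, n] of e^{i rho cosh y} (K(y) + K(-y)).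
   In this sum the near-poles of K(y) and K(-y) at y = 0 cancel: with Q = sinh^2 y + sin^2 chi,
     |K(y) + K(-y)| <= e^{-alpha y} + 2 |sin chi| cosh (alpha y) / Q,
   and |sin chi| cosh y / Q is the derivative of atan (sinh y / |sin chi|), whose increase on
   [0, oo) is at most pi/2 whatever chi is.  For the difference, |e^{i t} - 1| <= 2 t^eps and
   cosh y <= e^y cost a factor rho^eps e^{eps y}, which the same majorant absorbs as long as
   eps < alpha and alpha + eps <= 1. *)

Lemma exp_le_compat (x y : R) : x <= y -> exp x <= exp y.
Proof. intros [Hlt | ->]; [left; apply exp_increasing, Hlt | right; reflexivity]. Qed.

Lemma exp_mul_exp_opp (x : R) : exp x * exp (- x) = 1.
Proof. rewrite <- exp_plus, Rplus_opp_r. apply exp_0. Qed.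

Lemma exp_tail_small (c a eps : R) : 0 < a -> 0 < eps ->
  exists A, 1 <= A /\ c * exp (- (a * A)) < eps.
Proof.
intros Ha Heps.
set (A := Rmax 1 (Rabs c / (a * eps))).
exists A. split; [apply Rmax_l |].
assert (HA : 1 <= A) by apply Rmax_l.
assert (HcA : Rabs c <= A * (a * eps)) by (apply Rle_div_l; [nra | apply Rmax_r]).
assert (HE : a * A < exp (a * A)) by (pose proof (exp_ineq1 (a * A) ltac:(nra)); lra).
rewrite exp_Ropp. apply (Rmult_lt_reg_r (exp (a * A))); [apply exp_pos |].
rewrite Rmult_assoc, Rinv_l, Rmult_1_r by (pose proof (exp_pos (a * A)); lra).
pose proof (Rle_abs c). nra.
Qed.

Lemma cosh_opp (x : R) : cosh (- x) = cosh x.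
Proof. unfold cosh. rewrite Ropp_involutive. field. Qed.

Lemma cosh_ge_1 (x : R) : 1 <= cosh x.
Proof.
unfold cosh. pose proof (exp_mul_exp_opp x) as Hinv.
pose proof (Rmult_le_pos _ _ (pow2_ge_0 (exp x - 1)) (Rlt_le _ _ (exp_pos (- x)))) as Hsq.
replace ((exp x - 1) ^ 2 * exp (- x)) with (exp x - 2 + exp (- x)) in Hsq
  by (transitivity (exp x * (exp x * exp (- x)) - 2 * (exp x * exp (- x)) + exp (- x));
      [rewrite Hinv; ring | ring]).
lra.
Qed.

Lemma cosh_sub_cosh_bounds (alpha y : R) : 0 <= alpha <= 1 -> 0 <= y ->
  0 <= cosh ((2 - alpha) * y) - cosh (alpha * y) <= 2 * exp (- (alpha * y)) * sinh y ^ 2.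
Proof.
intros Ha Hy.
assert (HE : 1 <= exp y) by (rewrite <- exp_0; apply exp_le_compat; lra).
assert (Ha1 : 1 <= exp (alpha * y)) by (rewrite <- exp_0; apply exp_le_compat; nra).
assert (HaE : exp (alpha * y) <= exp y) by (apply exp_le_compat; nra).
unfold cosh, sinh.
replace ((2 - alpha) * y) with (y + y + - (alpha * y)) by ring.
replace (- (y + y + - (alpha * y))) with (alpha * y + - y + - y) by ring.
rewrite !exp_plus, !exp_Ropp.
set (E := exp y) in *. set (a := exp (alpha * y)) in *.
assert (Hlow : (E * E * / a + a * / E * / E) / 2 - (a + / a) / 2
               = (E * E - a * a) * (E * E - 1) / (2 * a * (E * E))) by (field; lra).
assert (Hup : 2 * / a * ((E - / E) / 2) ^ 2 - ((E * E * / a + a * / E * / E) / 2 - (a + / a) / 2)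
               = (a * a - 1) * (E * E - 1) / (2 * a * (E * E))) by (field; lra).
assert (Hden : 0 < 2 * a * (E * E)) by nra.
assert (HE2 : 0 <= E * E - 1) by nra.
split.
- rewrite Hlow. apply Rdiv_le_0_compat; [apply Rmult_le_pos; nra | exact Hden].
- assert (Hgap : 0 <= (a * a - 1) * (E * E - 1) / (2 * a * (E * E)))
    by (apply Rdiv_le_0_compat; [apply Rmult_le_pos; nra | exact Hden]).
  lra.
Qed.

Lemma exp_mul_cosh_le (alpha eps y : R) : 0 <= alpha -> 0 <= eps -> alpha + eps <= 1 -> 0 <= y ->
  exp (eps * y) * cosh (alpha * y) <= 2 * cosh y.
Proof.
intros Ha He Hae Hy. unfold cosh.
rewrite Rmult_div_assoc, Rmult_plus_distr_l, <- !exp_plus.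
assert (exp (eps * y + alpha * y) <= exp y) by (apply exp_le_compat; nra).
assert (exp (eps * y + - (alpha * y)) <= exp y) by (apply exp_le_compat; nra).
pose proof (exp_pos (- y)). lra.
Qed.

Lemma Rabs_sin_le (x : R) : Rabs (sin x) <= Rabs x.
Proof.
assert (Hpos : forall z, 0 <= z -> Rabs (sin z) <= z).
{ intros z [Hz | <-]; [| rewrite sin_0, Rabs_R0; lra].
  pose proof (sin_lt_x z Hz). apply Rabs_le. split; [| lra].
  destruct (Rle_lt_dec z 1).
  - assert (0 <= sin z) by (apply sin_ge_0; pose proof PI2_1; lra). lra.
  - pose proof (SIN_bound z). lra. }
destruct (Rle_lt_dec 0 x).
- rewrite (Rabs_right x) by lra. auto.
- rewrite <- (Ropp_involutive x), sin_neg, !Rabs_Ropp, (Rabs_left x) by lra. apply Hpos. lra.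
Qed.

Lemma Cmod_le_Rabs_re_im (z : C) : Cmod z <= Rabs (Re z) + Rabs (Im z).
Proof.
destruct z as [x y]. unfold Cmod, Re, Im; simpl.
rewrite <- (sqrt_Rsqr (Rabs x + Rabs y)) by (pose proof (Rabs_pos x); pose proof (Rabs_pos y); lra).
apply sqrt_le_1_alt. unfold Rsqr.
pose proof (Rsqr_abs x) as Hx. pose proof (Rsqr_abs y) as Hy. unfold Rsqr in Hx, Hy.
pose proof (Rabs_pos x). pose proof (Rabs_pos y). nra.
Qed.

Lemma Cmod_sub_ge (z w : C) : Rabs (Cmod z - Cmod w) <= Cmod (Cminus z w).
Proof. rewrite !Cmod_norm. apply (norm_triangle_inv (V := C_R_NormedModule)). Qed.

Lemma Cdiv_eq_of_Cmult (x z t : C) : z <> RtoC 0 -> Cmult z t = x -> Cdiv x z = t.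
Proof. intros Hz <-. field. exact Hz. Qed.

Lemma Cmod_cexp (z : C) : Cmod (cexp z) = exp (Re z).
Proof.
unfold cexp, Cmod; simpl.
replace (exp (Re z) * cos (Im z) * (exp (Re z) * cos (Im z) * 1) +
         exp (Re z) * sin (Im z) * (exp (Re z) * sin (Im z) * 1))
  with (Rsqr (exp (Re z)) * (Rsqr (sin (Im z)) + Rsqr (cos (Im z)))) by (unfold Rsqr; ring).
rewrite sin2_cos2, Rmult_1_r. apply sqrt_Rsqr. left; apply exp_pos.
Qed.

Lemma Cmod_cexp_sub_1 (t : R) : Cmod (Cminus (cexp (0, t)) (RtoC 1)) = 2 * Rabs (sin (t / 2)).
Proof.
unfold cexp, Cminus, Cmod, RtoC, Cplus, Copp; simpl. rewrite exp_0.
assert (Hcos : cos t = 1 - 2 * sin (t / 2) * sin (t / 2))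
  by (rewrite <- cos_2a_sin; f_equal; field).
assert (Hsin : sin t = 2 * sin (t / 2) * cos (t / 2)) by (rewrite <- sin_2a; f_equal; field).
pose proof (sin2_cos2 (t / 2)) as Hsc. unfold Rsqr in Hsc.
set (s := sin (t / 2)) in *. set (c := cos (t / 2)) in *.
rewrite Hcos, Hsin, <- (sqrt_Rsqr (2 * Rabs s)) by (pose proof (Rabs_pos s); lra).
f_equal. pose proof (Rsqr_abs s) as Hs. unfold Rsqr in *.
transitivity (4 * (s * s) * (s * s + c * c)); [ring | rewrite Hsc, Hs; ring].
Qed.

Lemma Cmod_cexp_sub_1_le_Rpower (t eps : R) : 0 < t -> 0 <= eps <= 1 ->
  Cmod (Cminus (cexp (0, t)) (RtoC 1)) <= 2 * Rpower t eps.
Proof.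
intros Ht Heps. rewrite Cmod_cexp_sub_1.
destruct (Rle_lt_dec 1 t).
- assert (1 <= Rpower t eps) by (rewrite <- (Rpower_O t) by lra; apply Rle_Rpower; lra).
  pose proof (SIN_bound (t / 2)). assert (Rabs (sin (t / 2)) <= 1) by (apply Rabs_le; lra). lra.
- assert (Rabs (sin (t / 2)) <= t / 2)
    by (rewrite <- (Rabs_right (t / 2)) at 2 by lra; apply Rabs_sin_le).
  assert (t <= Rpower t eps).
  { rewrite <- (Rpower_1 t) at 1 by lra. unfold Rpower. apply exp_le_compat.
    assert (ln t < 0) by (rewrite <- ln_1; apply ln_increasing; lra). nra. }
  lra.
Qed.

Lemma closed_filterlimi {T : Type} {U : UniformSpace} {F : (T -> Prop) -> Prop}
  {FF : ProperFilter F} (g : T -> U -> Prop) (D : U -> Prop) (y : U) :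
  filterlimi g F (locally y) -> F (fun x => forall z, g x z -> D z) -> closed D -> D y.
Proof.
intros Hlim HD Hclosed. apply Hclosed. intros Hnot.
assert (Hout : F (fun x => exists z, g x z /\ ~ D z)) by exact (Hlim _ Hnot).
destruct (filter_ex _ (filter_and _ _ Hout HD)) as [x [[z [Hz HnD]] Hall]].
exact (HnD (Hall z Hz)).
Qed.

Section ImproperIntegral.

Context {V : CompleteNormedModule R_AbsRing}.

Lemma is_RInt_symmetrize (f : R -> V) (n : R) (l : V) : 0 <= n ->
  is_RInt f (- n) n l -> is_RInt (fun y => plus (f y) (f (- y))) 0 n l.
Proof.
intros Hn Hl.
assert (Hex : ex_RInt f (- n) n) by (exists l; exact Hl).
assert (Hneg : is_RInt (fun y => f (- y)) 0 n (RInt f (- n) 0)).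
{ assert (H : is_RInt f (- n) (- 0) (RInt f (- n) 0)).
  { rewrite Ropp_0. apply RInt_correct, (ex_RInt_Chasles_1 _ _ _ n); [lra | exact Hex]. }
  apply is_RInt_comp_opp, is_RInt_swap, is_RInt_opp in H. rewrite opp_opp in H.
  eapply is_RInt_ext; [|exact H]. intros; apply opp_opp. }
replace l with (plus (RInt f 0 n) (RInt f (- n) 0)).
- apply (is_RInt_plus f (fun y => f (- y))); [|exact Hneg].
  apply RInt_correct, (ex_RInt_Chasles_2 _ (- n)); [lra | exact Hex].
- rewrite plus_comm, RInt_Chasles.
  + apply is_RInt_unique, Hl.
  + apply (ex_RInt_Chasles_1 _ _ _ n); [lra | exact Hex].
  + apply (ex_RInt_Chasles_2 _ (- n)); [lra | exact Hex].
Qed.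

Lemma norm_is_RInt_gen_le_sym (f : R -> V) (g : R -> R) (l : V) (B : R) :
  is_RInt_gen f (Rbar_locally m_infty) (Rbar_locally p_infty) l ->
  (forall y, 0 <= y -> norm (plus (f y) (f (- y))) <= g y) ->
  (forall n, 0 <= n -> exists2 Ig, is_RInt g 0 n Ig & Ig <= B) ->
  norm l <= B.
Proof.
intros Hl Hfg HgB.
apply (closed_filterlimi (F := Rbar_locally p_infty) (fun n => is_RInt f (- n) n)
         (fun z => norm z <= B) l).
- apply (filterlimi_comp_2 (G := Rbar_locally m_infty) (H := Rbar_locally p_infty)
           Ropp (fun n => n) (fun a b => is_RInt f a b)); [| |exact Hl].
  + apply (is_lim_opp (fun n => n) p_infty p_infty), is_lim_id.
  + apply is_lim_id.
- exists 0. intros n Hn z Hz.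
  destruct (HgB n (Rlt_le _ _ Hn)) as [Ig HIg HIgB].
  apply Rle_trans with Ig; [|exact HIgB].
  apply (norm_RInt_le (fun y => plus (f y) (f (- y))) g 0 n);
    [lra | intros y Hy; apply Hfg; lra | apply is_RInt_symmetrize; [lra | exact Hz] | exact HIg].
- apply (closed_comp norm (fun r => r <= B)); [apply filterlim_norm | apply closed_le].
Qed.

Lemma norm_RInt_swap (f : R -> V) (u v : R) :
  ex_RInt f u v -> norm (RInt f v u) = norm (RInt f u v).
Proof. intros Hex. rewrite <- opp_RInt_swap by exact Hex. exact (norm_opp (RInt f u v)). Qed.

Lemma minus_RInt (f : R -> V) (a b a' b' : R) : (forall u v, ex_RInt f u v) ->
  minus (RInt f a' b') (RInt f a b) = plus (RInt f a' a) (RInt f b b').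
Proof.
intros Hex.
rewrite <- (RInt_Chasles f a' a b'), <- (RInt_Chasles f a b b') by apply Hex.
unfold minus. rewrite (plus_comm (RInt f a b) (RInt f b b')), !plus_assoc.
rewrite <- plus_assoc. etransitivity; [apply f_equal, plus_opp_r | apply plus_zero_r].
Qed.

Lemma norm_RInt_le_primitive (f : R -> V) (g G : R -> R) (u v : R) : u <= v ->
  ex_RInt f u v ->
  (forall x, u <= x <= v -> norm (f x) <= g x) ->
  (forall x, u <= x <= v -> is_derive G x (g x)) ->
  (forall x, u <= x <= v -> continuous g x) ->
  norm (RInt f u v) <= G v - G u.
Proof.
intros Huv Hex Hfg HG Hg.
apply (norm_RInt_le f g u v); [exact Huv | exact Hfg | apply RInt_correct, Hex |].
apply (is_RInt_derive G g); rewrite Rmin_left, Rmax_right by exact Huv; assumption.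
Qed.

Section ExpDecay.

Variables (f : R -> V) (a K : R).
Hypothesis a_gt0 : 0 < a.
Hypothesis f_integrable : forall u v, ex_RInt f u v.
Hypothesis f_decay : forall y, 1 <= Rabs y -> norm (f y) <= K * exp (- (a * Rabs y)).

Lemma tail_const_nonneg : 0 <= K / a.
Proof.
pose proof (f_decay 1 ltac:(rewrite Rabs_R1; lra)).
pose proof (norm_ge_0 (f 1)). pose proof (exp_pos (- (a * Rabs 1))).
apply Rdiv_le_0_compat; nra.
Qed.

Lemma norm_RInt_le_exp_tail_pos (u v : R) : 1 <= u <= v ->
  norm (RInt f u v) <= K / a * exp (- (a * u)).
Proof.
intros Huv.
assert (0 <= K / a * exp (- (a * v)))
  by (apply Rmult_le_pos; [apply tail_const_nonneg | left; apply exp_pos]).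
apply Rle_trans with (- (K / a * exp (- (a * v))) - - (K / a * exp (- (a * u)))); [|lra].
apply (norm_RInt_le_primitive f (fun y => K * exp (- (a * y)))
                              (fun y => - (K / a * exp (- (a * y)))));
  [lra | apply f_integrable | | |]; intros x Hx.
- rewrite <- (Rabs_right x) at 2 by lra. apply f_decay. rewrite Rabs_right; lra.
- auto_derive; [exact I | field; lra].
- apply (ex_derive_continuous (fun y => K * exp (- (a * y)))). auto_derive. exact I.
Qed.

Lemma norm_RInt_le_exp_tail_neg (u v : R) : u <= v <= - 1 ->
  norm (RInt f u v) <= K / a * exp (a * v).
Proof.
intros Huv.
assert (0 <= K / a * exp (a * u))
  by (apply Rmult_le_pos; [apply tail_const_nonneg | left; apply exp_pos]).
apply Rle_trans with (K / a * exp (a * v) - K / a * exp (a * u)); [|lra].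
apply (norm_RInt_le_primitive f (fun y => K * exp (a * y)) (fun y => K / a * exp (a * y)));
  [lra | apply f_integrable | | |]; intros x Hx.
- replace (a * x) with (- (a * Rabs x)) by (rewrite Rabs_left by lra; ring).
  apply f_decay. rewrite Rabs_left; lra.
- auto_derive; [exact I | field; lra].
- apply (ex_derive_continuous (fun y => K * exp (a * y))). auto_derive. exact I.
Qed.

Lemma norm_RInt_le_exp_tail (A u v : R) : 1 <= A ->
  (A <= u /\ A <= v) \/ (u <= - A /\ v <= - A) ->
  norm (RInt f u v) <= K / a * exp (- (a * A)).
Proof.
intros HA Huv.
pose proof tail_const_nonneg as HKa.
assert (Hord : forall u v, u <= v -> (A <= u /\ A <= v) \/ (u <= - A /\ v <= - A) ->
  norm (RInt f u v) <= K / a * exp (- (a * A))).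
{ clear u v Huv. intros u v Hle [[Hu Hv] | [Hu Hv]].
  - eapply Rle_trans; [apply norm_RInt_le_exp_tail_pos; lra|].
    apply Rmult_le_compat_l; [exact HKa|]. apply exp_le_compat. nra.
  - eapply Rle_trans; [apply norm_RInt_le_exp_tail_neg; lra|].
    apply Rmult_le_compat_l; [exact HKa|]. apply exp_le_compat. nra. }
destruct (Rle_lt_dec u v) as [Huv' | Hvu]; [now apply Hord|].
rewrite <- norm_RInt_swap by apply f_integrable. apply Hord; [lra | tauto].
Qed.

Lemma ex_is_RInt_gen_exp_decay :
  exists l, is_RInt_gen f (Rbar_locally m_infty) (Rbar_locally p_infty) l.
Proof.
assert (Hfun : filter_prod (Rbar_locally m_infty) (Rbar_locally p_infty)
  (fun uv => (exists l, is_RInt f (fst uv) (snd uv) l) /\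
     (forall l1 l2, is_RInt f (fst uv) (snd uv) l1 -> is_RInt f (fst uv) (snd uv) l2 -> l1 = l2))).
{ apply filter_forall. intros [u v]. split.
  - exists (RInt f u v). apply RInt_correct, f_integrable.
  - intros l1 l2 H1 H2. rewrite <- (is_RInt_unique _ _ _ _ H1). exact (is_RInt_unique _ _ _ _ H2). }
apply (proj1 (filterlimi_locally_cauchy _ Hfun)).
intros eps.
destruct (exp_tail_small (K / a) a (eps / 2) a_gt0) as [A [HA HtailA]]; [apply is_pos_div_2|].
exists (fun uv => fst uv < - A /\ A < snd uv). split.
- exists (fun u => u < - A) (fun v => A < v); [exists (- A); tauto | exists A; tauto | tauto].
- intros [u v] [u' v'] [Hu Hv] [Hu' Hv'] l l' Hl Hl'. simpl in *.
  rewrite <- (is_RInt_unique _ _ _ _ Hl), <- (is_RInt_unique _ _ _ _ Hl').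
  apply (@norm_compat1 R_AbsRing V). rewrite minus_RInt by exact f_integrable.
  eapply Rle_lt_trans; [apply (@norm_triangle R_AbsRing V)|].
  pose proof (norm_RInt_le_exp_tail A u' u HA ltac:(right; lra)).
  pose proof (norm_RInt_le_exp_tail A v v' HA ltac:(left; lra)).
  lra.
Qed.

End ExpDecay.

End ImproperIntegral.

Definition kernel (alpha chi y : R) : C :=
  Cdiv (RtoC (exp (- (y * alpha)))) (Cminus (RtoC 1) (cexp (- (2 * y), - (2 * chi)))).

(* |sinh (y + i chi)|^2 *)
Definition kernel_denom (chi y : R) : R := sinh y ^ 2 + sin chi ^ 2.

Definition sym_kernel (alpha chi y : R) : C := Cplus (kernel alpha chi y) (kernel alpha chi (- y)).

Lemma kernel_denom_pos (chi y : R) : sin chi <> 0 -> 0 < kernel_denom chi y.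
Proof.
intros Hs. unfold kernel_denom.
pose proof (pow2_ge_0 (sinh y)). assert (0 < sin chi ^ 2) by (apply pow2_gt_0; exact Hs). lra.
Qed.

Lemma kernel_denom_opp (chi y : R) : kernel_denom chi (- y) = kernel_denom chi y.
Proof. unfold kernel_denom, sinh. rewrite Ropp_involutive. field. Qed.

Lemma four_kernel_denom (chi y : R) :
  4 * kernel_denom chi y = exp (2 * y) - 2 * cos (2 * chi) + exp (- (2 * y)).
Proof.
unfold kernel_denom, sinh. rewrite cos_2a_sin.
replace (2 * y) with (y + y) by ring. replace (- (y + y)) with (- y + - y) by ring.
rewrite !exp_plus. pose proof (exp_mul_exp_opp y). nra.
Qed.

Lemma kernel_eq (alpha chi y : R) : sin chi <> 0 ->
  kernel alpha chi y =
  (exp (- (y * alpha)) * (exp (2 * y) - cos (2 * chi)) / (4 * kernel_denom chi y),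
   - exp (- (y * alpha)) * sin (2 * chi) / (4 * kernel_denom chi y)).
Proof.
intros Hs. pose proof (kernel_denom_pos chi y Hs) as HQ.
pose proof (four_kernel_denom chi y) as H4Q. rewrite (exp_Ropp (2 * y)) in H4Q.
assert (Hsc : sin (2 * chi) ^ 2 = 1 - cos (2 * chi) ^ 2)
  by (rewrite <- (sin2_cos2 (2 * chi)); unfold Rsqr; ring).
pose proof (exp_pos (2 * y)) as HE.
unfold kernel, cexp, Cminus, Cplus, Copp, RtoC; simpl.
rewrite cos_neg, sin_neg, (exp_Ropp (2 * y)).
apply Cdiv_eq_of_Cmult.
- intros H0. injection H0 as Hre Him.
  assert (Hsin : sin (2 * chi) = 0).
  { apply (Rmult_eq_reg_l (/ exp (2 * y))); [lra | apply Rinv_neq_0_compat; lra]. }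
  assert (Hcos : cos (2 * chi) = exp (2 * y)) by (field_simplify_eq in Hre; lra).
  rewrite Hsin, Hcos in Hsc. rewrite Hcos in H4Q. simpl in Hsc.
  assert (HEinv : exp (2 * y) * / exp (2 * y) = 1) by (field; lra).
  nra.
- assert (Hden : (exp (2 * y) - 2 * cos (2 * chi)) * exp (2 * y) + 1
                 = exp (2 * y) * (4 * kernel_denom chi y)) by (rewrite H4Q; field; lra).
  assert (0 < exp (2 * y) * (4 * kernel_denom chi y)) by (apply Rmult_lt_0_compat; lra).
  unfold Cmult; simpl. rewrite H4Q.
  f_equal; field_simplify_eq; try (rewrite Hsc; ring); split; lra.
Qed.

Lemma Cmod_kernel_le (alpha chi y : R) : 0 <= alpha <= 1 -> 1 <= Rabs y ->
  Cmod (kernel alpha chi y) <= 2 * exp (- (alpha * Rabs y)).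
Proof.
intros Ha Hy.
set (w := cexp (- (2 * y), - (2 * chi))).
set (p := exp (- (2 * y))).
assert (Hgap : Rabs (1 - p) <= Cmod (Cminus (RtoC 1) w)).
{ pose proof (Cmod_sub_ge (RtoC 1) w) as H. rewrite Cmod_R, Rabs_R1 in H.
  unfold w in H. rewrite Cmod_cexp in H. exact H. }
assert (He2 : 3 < exp 2) by (pose proof (exp_ineq1 2 ltac:(lra)); lra).
assert (Hr : 0 < exp (- (y * alpha))) by apply exp_pos.
assert (Hp : 0 < p) by apply exp_pos.
assert (Hk : forall d, 0 < d -> d <= Rabs (1 - p) ->
          Cmod (kernel alpha chi y) <= exp (- (y * alpha)) / d).
{ intros d Hd Hdp. unfold kernel. fold w.
  rewrite Cmod_div, Cmod_R, Rabs_right by (lra || (intros H0; rewrite H0, Cmod_0 in Hgap; lra)).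
  apply Rmult_le_compat_l; [lra|]. apply Rinv_le_contravar; lra. }
destruct (Rle_lt_dec 0 y) as [Hy0 | Hy0].
- rewrite Rabs_right in Hy |- * by lra.
  assert (p <= / exp 2).
  { unfold p. rewrite <- exp_Ropp. apply exp_le_compat. lra. }
  assert (/ exp 2 < 1 / 3) by (unfold Rdiv; rewrite Rmult_1_l; apply Rinv_lt_contravar; lra).
  eapply Rle_trans; [apply (Hk (1 / 2)); [lra | rewrite Rabs_right; lra]|].
  replace (y * alpha) with (alpha * y) by ring. lra.
- rewrite Rabs_left in Hy |- * by lra.
  assert (exp 2 <= p) by (apply exp_le_compat; lra).
  eapply Rle_trans; [apply (Hk (p / 2)); [lra | rewrite Rabs_left; lra]|].
  assert (Hdecay : exp (- (y * alpha)) / (p / 2) = 2 * exp (- (y * alpha) + 2 * y)).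
  { unfold p. rewrite exp_plus, (exp_Ropp (2 * y)). field. pose proof (exp_pos (2 * y)); lra. }
  rewrite Hdecay. apply Rmult_le_compat_l; [lra|]. apply exp_le_compat. nra.
Qed.

Lemma ex_RInt_I_integrand (alpha rho chi a b : R) : sin chi <> 0 ->
  ex_RInt (I_integrand alpha rho chi) a b.
Proof.
intros Hs.
apply (ex_RInt_ext (fun t => Cmult (cexp (0, rho * cosh t))
  (exp (- (t * alpha)) * (exp (2 * t) - cos (2 * chi)) / (4 * kernel_denom chi t),
   - exp (- (t * alpha)) * sin (2 * chi) / (4 * kernel_denom chi t)))).
{ intros t _. unfold I_integrand. fold (kernel alpha chi t).
  rewrite kernel_eq by exact Hs. reflexivity. }
apply ex_RInt_fct_extend_pair; apply (ex_RInt_continuous (V := R_CompleteNormedModule));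
  intros t _; apply (ex_derive_continuous (V := R_NormedModule));
  pose proof (kernel_denom_pos chi t Hs) as HQ; unfold kernel_denom, cosh, sinh in *;
  simpl; auto_derive; repeat split; lra.
Qed.

Lemma ex_is_RInt_gen_I_integrand (alpha rho chi : R) : 0 < alpha <= 1 -> sin chi <> 0 ->
  exists l, is_RInt_gen (V := C_R_CompleteNormedModule) (I_integrand alpha rho chi)
              (Rbar_locally m_infty) (Rbar_locally p_infty) l.
Proof.
intros Ha Hs. apply (ex_is_RInt_gen_exp_decay (V := C_R_CompleteNormedModule) _ alpha 2);
  [lra | intros; apply ex_RInt_I_integrand, Hs |].
intros y Hy. rewrite <- Cmod_norm. unfold I_integrand. fold (kernel alpha chi y).
rewrite Cmod_mult, Cmod_cexp. simpl Re. rewrite exp_0, Rmult_1_l. apply Cmod_kernel_le; lra.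
Qed.

Lemma sym_kernel_eq (alpha chi y : R) : sin chi <> 0 ->
  sym_kernel alpha chi y =
  ((cosh ((2 - alpha) * y) - cosh (alpha * y)) / (2 * kernel_denom chi y)
     + sin chi ^ 2 * cosh (alpha * y) / kernel_denom chi y,
   - (sin chi * cos chi * cosh (alpha * y)) / kernel_denom chi y).
Proof.
intros Hs. pose proof (kernel_denom_pos chi y Hs) as HQ.
unfold sym_kernel. rewrite !kernel_eq, kernel_denom_opp by exact Hs.
unfold Cplus; simpl. rewrite cos_2a_sin, sin_2a.
unfold cosh.
replace ((2 - alpha) * y) with (2 * y + - (y * alpha)) by ring.
replace (- (2 * y + - (y * alpha))) with (2 * - y + - (- y * alpha)) by ring.
replace (alpha * y) with (- (- y * alpha)) by ring.
replace (- - (- y * alpha)) with (- (y * alpha)) by ring.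
rewrite !exp_plus. f_equal; field; lra.
Qed.

Lemma Cmod_sym_kernel_le (alpha chi y : R) : 0 <= alpha <= 1 -> 0 <= y -> sin chi <> 0 ->
  Cmod (sym_kernel alpha chi y)
    <= exp (- (alpha * y)) + 2 * Rabs (sin chi) * cosh (alpha * y) / kernel_denom chi y.
Proof.
intros Ha Hy Hs.
pose proof (kernel_denom_pos chi y Hs) as HQ.
destruct (cosh_sub_cosh_bounds alpha y Ha Hy) as [HD0 HD1].
assert (Hsh : sinh y ^ 2 <= kernel_denom chi y)
  by (unfold kernel_denom; pose proof (pow2_ge_0 (sin chi)); lra).
assert (Hs1 : Rabs (sin chi) <= 1) by (apply Rabs_le, SIN_bound).
assert (Hc1 : Rabs (cos chi) <= 1) by (apply Rabs_le, COS_bound).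
assert (Hs2 : sin chi ^ 2 <= Rabs (sin chi)).
{ rewrite <- (pow2_abs (sin chi)). pose proof (Rabs_pos (sin chi)). nra. }
pose proof (cosh_ge_1 (alpha * y)) as Hch. pose proof (exp_pos (- (alpha * y))) as He.
rewrite sym_kernel_eq by exact Hs.
eapply Rle_trans; [apply Cmod_le_Rabs_re_im|]. unfold Re, Im; cbn [fst snd].
set (Q := kernel_denom chi y) in *. set (D := cosh ((2 - alpha) * y) - cosh (alpha * y)) in *.
set (ch := cosh (alpha * y)) in *.
replace (D / (2 * Q) + sin chi ^ 2 * ch / Q) with ((D / 2 + sin chi ^ 2 * ch) / Q) by (field; lra).
replace (exp (- (alpha * y)) + 2 * Rabs (sin chi) * ch / Q)
  with ((exp (- (alpha * y)) * Q + 2 * Rabs (sin chi) * ch) / Q) by (field; lra).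
rewrite !Rabs_div, Rabs_Ropp, !Rabs_mult, (Rabs_right Q), (Rabs_right ch) by lra.
rewrite (Rabs_right (D / 2 + sin chi ^ 2 * ch)) by (pose proof (pow2_ge_0 (sin chi)); nra).
unfold Rdiv. rewrite <- Rmult_plus_distr_r.
apply Rmult_le_compat_r; [apply Rlt_le, Rinv_0_lt_compat, HQ|].
assert (Hsc : Rabs (sin chi) * Rabs (cos chi) * ch <= Rabs (sin chi) * ch).
{ apply Rmult_le_compat_r; [lra|]. rewrite <- (Rmult_1_r (Rabs (sin chi))) at 2.
  apply Rmult_le_compat_l; [apply Rabs_pos | exact Hc1]. }
assert (HeQ : exp (- (alpha * y)) * sinh y ^ 2 <= exp (- (alpha * y)) * Q)
  by (apply Rmult_le_compat_l; lra).
assert (Hs2ch : sin chi ^ 2 * ch <= Rabs (sin chi) * ch) by (apply Rmult_le_compat_r; lra).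
lra.
Qed.

Definition majorant (alpha chi eps y : R) : R :=
  exp ((eps - alpha) * y) + 4 * Rabs (sin chi) * cosh y / kernel_denom chi y.

Lemma exp_mul_Cmod_sym_kernel_le (alpha chi eps y : R) : 0 < alpha -> 0 <= eps ->
  alpha + eps <= 1 -> 0 <= y -> sin chi <> 0 ->
  exp (eps * y) * Cmod (sym_kernel alpha chi y) <= majorant alpha chi eps y.
Proof.
intros Ha He Hae Hy Hs. pose proof (kernel_denom_pos chi y Hs) as HQ.
eapply Rle_trans.
{ apply Rmult_le_compat_l; [left; apply exp_pos | apply Cmod_sym_kernel_le; auto; lra]. }
pose proof (exp_mul_cosh_le alpha eps y ltac:(lra) He Hae Hy) as Hch.
unfold majorant.
replace ((eps - alpha) * y) with (eps * y + - (alpha * y)) by ring. rewrite exp_plus.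
assert (Hfrac : exp (eps * y) * cosh (alpha * y) / kernel_denom chi y
                <= 2 * cosh y / kernel_denom chi y)
  by (apply Rmult_le_compat_r; [left; apply Rinv_0_lt_compat, HQ | exact Hch]).
pose proof (Rabs_pos (sin chi)) as Habs.
apply Rmult_le_compat_l with (r := 2 * Rabs (sin chi)) in Hfrac; [|lra].
unfold Rdiv in *. lra.
Qed.

Definition majorant_primitive (alpha chi eps y : R) : R :=
  exp ((eps - alpha) * y) / (eps - alpha) + 4 * atan (sinh y / Rabs (sin chi)).

Lemma is_derive_majorant_primitive (alpha chi eps y : R) : sin chi <> 0 -> eps <> alpha ->
  is_derive (majorant_primitive alpha chi eps) y (majorant alpha chi eps y).
Proof.
intros Hs Heps.
pose proof (Rabs_pos_lt _ Hs) as Habs. pose proof (kernel_denom_pos chi y Hs) as HQ.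
assert (Hatan : is_derive (fun z => atan (sinh z / Rabs (sin chi))) y
                  (cosh y / Rabs (sin chi) * / (1 + (sinh y / Rabs (sin chi)) ^ 2))).
{ apply (is_derive_comp atan (fun z => sinh z / Rabs (sin chi))).
  - apply is_derive_Reals, derivable_pt_lim_atan.
  - apply (is_derive_ext (fun z => (exp z - exp (- z)) / 2 / Rabs (sin chi))); [reflexivity|].
    auto_derive; [exact I | unfold cosh; field; lra]. }
unfold majorant_primitive.
eapply is_derive_ext; [intros; reflexivity|].
replace (majorant alpha chi eps y) with
  (exp ((eps - alpha) * y) + 4 * (cosh y / Rabs (sin chi) * / (1 + (sinh y / Rabs (sin chi)) ^ 2))).
- apply (is_derive_plus (fun z => exp ((eps - alpha) * z) / (eps - alpha))
                         (fun z => 4 * atan (sinh z / Rabs (sin chi)))).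
  + auto_derive; [exact I | field; lra].
  + apply (is_derive_scal (fun z => atan (sinh z / Rabs (sin chi)))), Hatan.
- unfold majorant, kernel_denom. rewrite <- (pow2_abs (sin chi)).
  field. pose proof (pow2_ge_0 (sinh y)). split; [|lra]. nra.
Qed.

Lemma continuous_majorant (alpha chi eps y : R) : sin chi <> 0 ->
  continuous (majorant alpha chi eps) y.
Proof.
intros Hs. pose proof (kernel_denom_pos chi y Hs) as HQ.
apply (ex_derive_continuous (V := R_NormedModule)).
unfold majorant, kernel_denom, cosh, sinh in *. auto_derive. lra.
Qed.

Lemma majorant_integral_le (alpha chi eps n : R) : sin chi <> 0 -> eps < alpha -> 0 <= n ->
  exists2 I, is_RInt (majorant alpha chi eps) 0 n I & I <= / (alpha - eps) + 2 * PI.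
Proof.
intros Hs Heps Hn.
exists (majorant_primitive alpha chi eps n - majorant_primitive alpha chi eps 0).
- apply (is_RInt_derive (majorant_primitive alpha chi eps)); intros y _.
  + apply is_derive_majorant_primitive; lra.
  + apply continuous_majorant, Hs.
- unfold majorant_primitive.
  replace (sinh 0 / Rabs (sin chi)) with 0 by (unfold sinh; rewrite Ropp_0, exp_0; field;
    apply Rabs_no_R0, Hs).
  rewrite Rmult_0_r, exp_0, atan_0.
  pose proof (atan_bound (sinh n / Rabs (sin chi))).
  assert (Hneg : exp ((eps - alpha) * n) / (eps - alpha) <= 0).
  { unfold Rdiv. pose proof (exp_pos ((eps - alpha) * n)).
    assert (/ (eps - alpha) < 0) by (apply Rinv_lt_0_compat; lra). nra. }
  replace (1 / (eps - alpha)) with (- / (alpha - eps)) by (field; lra).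
  lra.
Qed.

Lemma I_integrand_sym (alpha rho chi y : R) :
  Cplus (I_integrand alpha rho chi y) (I_integrand alpha rho chi (- y))
  = Cmult (cexp (0, rho * cosh y)) (sym_kernel alpha chi y).
Proof. unfold I_integrand, sym_kernel, kernel. rewrite cosh_opp. ring. Qed.

Lemma Cmod_I_integrand_sym_le (alpha rho chi y : R) : 0 < alpha <= 1 -> 0 <= y -> sin chi <> 0 ->
  Cmod (Cplus (I_integrand alpha rho chi y) (I_integrand alpha rho chi (- y)))
    <= majorant alpha chi 0 y.
Proof.
intros Ha Hy Hs.
rewrite I_integrand_sym, Cmod_mult, Cmod_cexp. simpl Re.
rewrite <- (Rmult_0_l y) at 1.
apply exp_mul_Cmod_sym_kernel_le; lra.
Qed.

Lemma Cmod_I_integrand_sym_sub_le (alpha rho chi eps y : R) : 0 < alpha -> 0 < rho ->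
  0 <= eps -> alpha + eps <= 1 -> 0 <= y -> sin chi <> 0 ->
  Cmod (Cplus (Cminus (I_integrand alpha rho chi y) (I_integrand alpha 0 chi y))
              (Cminus (I_integrand alpha rho chi (- y)) (I_integrand alpha 0 chi (- y))))
    <= 2 * Rpower rho eps * majorant alpha chi eps y.
Proof.
intros Ha Hrho He Hae Hy Hs.
assert (Hcexp0 : cexp (0, 0) = RtoC 1).
{ unfold cexp, RtoC; simpl. rewrite exp_0, cos_0, sin_0. f_equal; ring. }
assert (Hfactor :
  Cplus (Cminus (I_integrand alpha rho chi y) (I_integrand alpha 0 chi y))
        (Cminus (I_integrand alpha rho chi (- y)) (I_integrand alpha 0 chi (- y)))
  = Cmult (Cminus (cexp (0, rho * cosh y)) (RtoC 1)) (sym_kernel alpha chi y)).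
{ transitivity
    (Cminus (Cplus (I_integrand alpha rho chi y) (I_integrand alpha rho chi (- y)))
            (Cplus (I_integrand alpha 0 chi y) (I_integrand alpha 0 chi (- y)))); [ring|].
  rewrite !I_integrand_sym, Rmult_0_l, Hcexp0. ring. }
rewrite Hfactor, Cmod_mult.
assert (Hosc : Cmod (Cminus (cexp (0, rho * cosh y)) (RtoC 1))
               <= 2 * Rpower rho eps * exp (eps * y)).
{ pose proof (cosh_ge_1 y) as Hch.
  eapply Rle_trans;
    [apply (Cmod_cexp_sub_1_le_Rpower _ eps); [apply Rmult_lt_0_compat | split]; lra|].
  rewrite <- Rpower_mult_distr, Rmult_assoc by lra.
  apply Rmult_le_compat_l; [lra|].
  apply Rmult_le_compat_l; [left; apply exp_pos|].
  replace (exp (eps * y)) with (Rpower (exp y) eps)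
    by (unfold Rpower; rewrite ln_exp, Rmult_comm; reflexivity).
  apply Rle_Rpower_l; [exact He|]. split; [lra|].
  unfold cosh. pose proof (exp_le_compat (- y) y ltac:(lra)). lra. }
eapply Rle_trans; [apply Rmult_le_compat_r; [apply Cmod_ge_0 | exact Hosc]|].
rewrite Rmult_assoc. apply Rmult_le_compat_l.
- pose proof (exp_pos (eps * ln rho)). unfold Rpower. lra.
- apply exp_mul_Cmod_sym_kernel_le; assumption.
Qed.

Lemma I_alpha_eq (alpha rho chi : R) (l : C) :
  is_RInt_gen (V := C_R_CompleteNormedModule) (I_integrand alpha rho chi)
    (Rbar_locally m_infty) (Rbar_locally p_infty) l ->
  I_alpha alpha rho chi = l.
Proof. apply (is_RInt_gen_unique (V := C_R_CompleteNormedModule) (I_integrand alpha rho chi)). Qed.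

Lemma sin_neq_0 (chi : R) : (forall k : Z, chi <> IZR k * PI) -> sin chi <> 0.
Proof. intros Hchi Hs. destruct (sin_eq_0_0 chi Hs) as [k Hk]. exact (Hchi k Hk). Qed.

Lemma Cmod_I_alpha_le (alpha rho chi : R) : 0 < alpha <= 1 -> sin chi <> 0 ->
  Cmod (I_alpha alpha rho chi) <= / alpha + 2 * PI.
Proof.
intros Ha Hs.
destruct (ex_is_RInt_gen_I_integrand alpha rho chi Ha Hs) as [l Hl].
rewrite (I_alpha_eq _ _ _ _ Hl), Cmod_norm.
apply (norm_is_RInt_gen_le_sym _ (majorant alpha chi 0) _ _ Hl).
- intros y Hy. rewrite <- Cmod_norm. apply Cmod_I_integrand_sym_le; assumption.
- intros n Hn. replace (/ alpha) with (/ (alpha - 0)) by (f_equal; ring).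
  apply majorant_integral_le; lra.
Qed.

Lemma Cmod_I_alpha_sub_le (alpha rho chi eps : R) : 0 <= eps < alpha -> alpha + eps <= 1 ->
  0 < rho -> sin chi <> 0 ->
  Cmod (Cminus (I_alpha alpha rho chi) (I_alpha alpha 0 chi))
    <= 2 * (/ (alpha - eps) + 2 * PI) * Rpower rho eps.
Proof.
intros Heps Hae Hrho Hs.
destruct (ex_is_RInt_gen_I_integrand alpha rho chi ltac:(lra) Hs) as [l1 Hl1].
destruct (ex_is_RInt_gen_I_integrand alpha 0 chi ltac:(lra) Hs) as [l0 Hl0].
rewrite (I_alpha_eq _ _ _ _ Hl1), (I_alpha_eq _ _ _ _ Hl0), Cmod_norm.
apply (norm_is_RInt_gen_le_sym _ (fun y => 2 * Rpower rho eps * majorant alpha chi eps y) _ _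
         (is_RInt_gen_minus _ _ _ _ Hl1 Hl0)).
- intros y Hy. rewrite <- Cmod_norm. apply Cmod_I_integrand_sym_sub_le; lra.
- intros n Hn. destruct (majorant_integral_le alpha chi eps n Hs ltac:(lra) Hn) as [I HI HIB].
  exists (2 * Rpower rho eps * I); [exact (is_RInt_scal _ _ _ _ _ HI)|].
  replace (2 * (/ (alpha - eps) + 2 * PI) * Rpower rho eps)
    with (2 * Rpower rho eps * (/ (alpha - eps) + 2 * PI)) by ring.
  apply Rmult_le_compat_l; [|exact HIB].
  pose proof (exp_pos (eps * ln rho)). unfold Rpower. lra.
Qed.

Theorem lemma2 (alpha : R) (Ha : 0 < alpha < 1) :
  (exists C0 : R, forall rho chi : R, 0 <= rho ->
      (forall k : Z, chi <> IZR k * PI) ->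
      Cmod (I_alpha alpha rho chi) <= C0) /\
  (forall eps : R, 0 <= eps < Rmin alpha (1 - alpha) ->
     exists Ceps : R, forall rho chi : R, 0 <= rho ->
      (forall k : Z, chi <> IZR k * PI) ->
      Cmod (Cminus (I_alpha alpha rho chi) (I_alpha alpha 0 chi))
        <= Ceps * Rpower rho eps).
Proof.
split.
- exists (/ alpha + 2 * PI). intros rho chi _ Hchi.
  apply Cmod_I_alpha_le; [lra | exact (sin_neq_0 chi Hchi)].
- intros eps [Heps0 Heps].
  pose proof (Rmin_l alpha (1 - alpha)). pose proof (Rmin_r alpha (1 - alpha)).
  exists (2 * (/ (alpha - eps) + 2 * PI)). intros rho chi Hrho Hchi.
  destruct (Req_dec rho 0) as [-> | Hrho0].
  + (* [Rpower 0 eps] is [exp (eps * ln 0)], hence positive. *)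
    replace (Cminus _ _) with (RtoC 0) by ring. rewrite Cmod_0.
    pose proof (Rinv_0_lt_compat (alpha - eps) ltac:(lra)). pose proof PI_RGT_0.
    pose proof (exp_pos (eps * ln 0)). unfold Rpower. nra.
  + apply Cmod_I_alpha_sub_le; [lra | lra | lra | exact (sin_neq_0 chi Hchi)].
Qed.
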